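(* Assume (A1) with $\Omega\supseteq B(x^*,\delta)$, (A2), (A3), (A4) with exponent $r\in(0,1]$. Let $c_1>0$ be such that $\|d_k\|\le c_1\operatorname{dist}(x_k,X^* )$. Consider one pure LMMSS step with $\lambda_k=\|J_k^TF_k\|^r$ and $x_{k+1}=x_k+d_k$. Let $\eta\in(0,1)$, $L_5=L_0L_2(1+c_1)(2+c_1)$, $L_7=L_4c_1^2+L_5+L_3^r\|L\|^2c_1$, $\hat C=L_7+(1+(1+c_1)^{1+r})C$. If $x_k,x_{k+1}\in B(x^*,\delta/2)$ and $\operatorname{dist}(x_k,X^* )<\varepsilon$ with $\varepsilon\le(\eta\omega/\hat C)^{1/r}$, then $\operatorname{dist}(x_{k+1},X^* )\le\eta\operatorname{dist}(x_k,X^* )$.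
   Context: Let $F:\mathbb{R}^n\to\mathbb{R}^m$ be twice continuously differentiable with $m\ge n$, $J(x)$ its Jacobian, $\phi(x)=\tfrac12\|F(x)\|^2$, $\nabla\phi(x)=J(x)^TF(x)$. Norms are Euclidean/spectral. $X^*=\{x: J(x)^TF(x)=0\}\neq\emptyset$; $\operatorname{dist}(x,X^* )=\inf_{z\in X^*}\|x-z\|$, and $\bar x$ denotes a point of $X^*$ with $\|x-\bar x\|=\operatorname{dist}(x,X^* )$. Fix $x^*\in X^*$; $B(x^*,\delta)$ is the closed ball. $L\in\mathbb{R}^{p\times n}$ has rank $p\le n$. $F_k=F(x_k)$, $J_k=J(x_k)$; the LMMSS direction $d_k$ solves $(J_k^TJ_k+\lambda_kL^TL)d_k=-J_k^TF_k$. (A1) there are $\Omega$ and $\gamma>0$ with $\|J(x)v\|^2+\|Lv\|^2\ge\gamma\|v\|^2$ for $x\in\Omega$, all $v$. (A2) $\delta\in(0,1)$, $L_0>0$ with $\|J(x)-J(y)\|\le L_0\|x-y\|$ on $B(x^*,\delta)$. (A3) $\omega>0$ with $\omega\operatorname{dist}(x,X^* )\le\|J(x)^TF(x)\|$ on $B(x^*,\delta)$. (A4) $r\in(0,1]$, $C\ge0$ with $\|(J(x)-J(z))^TF(z)\|\le C\|x-z\|^{1+r}$ for $x\in B(x^*,\delta)$, $z\in X^*\cap B(x^*,\delta)$. Constants: $L_2=\max_{B(x^*,\delta)}\|J\|$, $\beta=\max_{B(x^*,\delta)}\|F\|$, $L_3=L_2^2+\beta L_0$; $L_4>0$ is a constant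 such that $\|\nabla\phi(y)-\nabla\phi(x)-J(x)^TJ(x)(y-x)\|\le L_4\|x-y\|^2+\|(J(x)-J(y))^TF(y)\|$ for all $x,y\in B(x^*,\delta)$. *)

From HB Require Import structures.
From mathcomp Require Import all_boot all_order all_algebra.
From mathcomp Require Import all_classical all_reals all_analysis.
Set Implicit Arguments. Unset Strict Implicit. Unset Printing Implicit Defensive.
Import Order.TTheory GRing.Theory Num.Theory.
Import numFieldNormedType.Exports.
Local Open Scope classical_set_scope.
Local Open Scope ring_scope.

Definition enorm {R : realType} {k : nat} (v : 'cV[R]_k) : R :=
  Num.sqrt (\sum_(i < k) v i 0 ^+ 2).

Definition opnorm {R : realType} {p q : nat} (A : 'M[R]_(p, q)) : R :=
  sup [set enorm (A *m v) | v in [set v : 'cV[R]_q | enorm v <= 1]].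

Definition eball {R : realType} {k : nat} (c : 'cV[R]_k) (rad : R) : set 'cV[R]_k :=
  [set x | enorm (x - c) <= rad].

Definition setdist {R : realType} {k : nat} (x : 'cV[R]_k) (S : set 'cV[R]_k) : R :=
  inf [set enorm (x - z) | z in S].

Definition Xstar {R : realType} {m n : nat}
  (F : 'cV[R]_n -> 'cV[R]_m) (J : 'cV[R]_n -> 'M[R]_(m, n)) : set 'cV[R]_n :=
  [set x | (J x)^T *m F x = 0].

(* max over a (compact) set of a continuous nonnegative quantity, written as a sup. *)
Definition supOn {R : realType} {k : nat} (S : set 'cV[R]_k) (g : 'cV[R]_k -> R) : R :=
  sup [set g x | x in S].

(* F is twice continuously differentiable with Jacobian J:
   F is differentiable with derivative v |-> J x *m v, J is differentiable
   and its derivative x |-> 'd J x is continuous (tested on each direction,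
   equivalent in finite dimension). *)
Definition C2_with_jacobian {R : realType} {m n : nat}
  (F : 'cV[R]_n -> 'cV[R]_m) (J : 'cV[R]_n -> 'M[R]_(m, n)) : Prop :=
  (forall x, differentiable F x) /\
  (forall x v, 'd F x v = J x *m v) /\
  (forall x, differentiable J x) /\
  (forall v : 'cV[R]_n, continuous (fun x => 'd J x v)).

From HB Require Import structures.
From mathcomp Require Import all_boot all_order all_algebra.
From mathcomp Require Import all_classical all_reals all_analysis.
From mathcomp Require Import ring lra.
Import Order.TTheory GRing.Theory Num.Theory.
Import numFieldNormedType.Exports.
Local Open Scope classical_set_scope.
Local Open Scope ring_scope.

(* For [z] in X* near [x], write [s = enorm (x - z)].  The LMMSS equation
   [(J^T J + lambda L^T L) d = - J^T F] expresses [J(x+d)^T F(x+d)] as the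
   Taylor remainder [grad(x+d) - grad x - J^T J d] minus [lambda L^T L d].
   The remainder is [O(|d|^2)] plus [(J x - J(x+d))^T F(x+d)], which (A4)
   applied at [z] and the Lipschitz bounds make [O(s^(1+r))]; moreover
   [lambda = |grad x|^r = O(s^r)] and [|d| <= c1 s].  So
   [|grad(x+d)| <= Chat s^(1+r)], and (A3) turns this into
   [omega dist(x+d) <= Chat s^r * s <= eta omega s] as soon as
   [s^r <= eta omega / Chat].  Letting [z] approach the distance of [x] to
   X* gives the claim. *)

Section EuclideanNorm.
Context {R : realType}.

Definition dot {k} (u v : 'cV[R]_k) : R := \sum_(i < k) u i 0 * v i 0.

Lemma dotC {k} (u v : 'cV[R]_k) : dot u v = dot v u.
Proof. by apply: eq_bigr => i _; rewrite mulrC. Qed.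

Lemma dotDr {k} (u v w : 'cV[R]_k) : dot u (v + w) = dot u v + dot u w.
Proof. by rewrite /dot -big_split; apply: eq_bigr => i _; rewrite mxE mulrDr. Qed.

Lemma dotZr {k} (a : R) (u v : 'cV[R]_k) : dot u (a *: v) = a * dot u v.
Proof. by rewrite /dot mulr_sumr; apply: eq_bigr => i _; rewrite mxE mulrCA. Qed.

Lemma dotBr {k} (u v w : 'cV[R]_k) : dot u (v - w) = dot u v - dot u w.
Proof. by rewrite dotDr -scaleN1r dotZr mulN1r. Qed.

Lemma dotDl {k} (u v w : 'cV[R]_k) : dot (v + w) u = dot v u + dot w u.
Proof. by rewrite dotC dotDr !(dotC u). Qed.

Lemma dotZl {k} (a : R) (u v : 'cV[R]_k) : dot (a *: v) u = a * dot v u.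
Proof. by rewrite dotC dotZr dotC. Qed.

Lemma dotvv_ge0 {k} (v : 'cV[R]_k) : 0 <= dot v v.
Proof. by apply: sumr_ge0 => i _; rewrite -expr2 sqr_ge0. Qed.

Lemma dot_sqr_le {k} (u v : 'cV[R]_k) : dot u v ^+ 2 <= dot u u * dot v v.
Proof.
(* Lagrange's identity *)
have E : \sum_(i < k) \sum_(j < k) (u i 0 * v j 0 - u j 0 * v i 0) ^+ 2
    = 2 * (dot u u * dot v v - dot u v ^+ 2).
  have sqE i j : (u i 0 * v j 0 - u j 0 * v i 0) ^+ 2 =
      (u i 0 * u i 0) * (v j 0 * v j 0) + (v i 0 * v i 0) * (u j 0 * u j 0)
      - 2 * ((u i 0 * v i 0) * (u j 0 * v j 0)) by ring.
  under eq_bigr do under eq_bigr do rewrite sqE.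
  under eq_bigr do rewrite sumrB big_split /= -!mulr_sumr.
  rewrite sumrB big_split /= -!mulr_suml -mulr_sumr -mulr_suml /dot; ring.
have : 0 <= 2 * (dot u u * dot v v - dot u v ^+ 2).
  by rewrite -E; apply: sumr_ge0 => i _; apply: sumr_ge0 => j _; rewrite sqr_ge0.
by rewrite pmulr_rge0 // subr_ge0.
Qed.

Lemma dot_trmx {p q} (A : 'M[R]_(p, q)) (w : 'cV[R]_p) (v : 'cV[R]_q) :
  dot (A^T *m w) v = dot w (A *m v).
Proof.
rewrite /dot; under eq_bigr do rewrite mxE big_distrl /=.
rewrite exchange_big /=; apply: eq_bigr => i _.
rewrite mxE big_distrr /=; apply: eq_bigr => j _.
by rewrite mxE mulrCA mulrA.
Qed.

Lemma enormE {k} (v : 'cV[R]_k) : enorm v = Num.sqrt (dot v v).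
Proof. by rewrite /enorm; congr Num.sqrt; apply: eq_bigr => i _; rewrite expr2. Qed.

Lemma enorm_ge0 {k} (v : 'cV[R]_k) : 0 <= enorm v.
Proof. exact: sqrtr_ge0. Qed.

Lemma enorm_sqr {k} (v : 'cV[R]_k) : enorm v ^+ 2 = dot v v.
Proof. by rewrite enormE sqr_sqrtr ?dotvv_ge0. Qed.

Lemma enorm_eq0 {k} (v : 'cV[R]_k) : enorm v = 0 -> v = 0.
Proof.
move=> v0; have vv0 : dot v v = 0 by rewrite -enorm_sqr v0 expr0n.
have /psumr_eq0P vi0 : forall i : 'I_k, xpredT i -> 0 <= v i 0 * v i 0.
  by move=> i _; rewrite -expr2 sqr_ge0.
apply/matrixP => i j; rewrite (ord1 j) mxE.
by have /eqP := vi0 vv0 i isT; rewrite mulf_eq0 orbb => /eqP.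
Qed.

Lemma enormZ {k} (a : R) (v : 'cV[R]_k) : enorm (a *: v) = `|a| * enorm v.
Proof. by rewrite !enormE dotZl dotZr mulrA -expr2 sqrtrM ?sqr_ge0 // sqrtr_sqr. Qed.

Lemma enorm0 {k} : enorm (0 : 'cV[R]_k) = 0.
Proof. by rewrite -(scale0r 0) enormZ normr0 mul0r. Qed.

Lemma enormN {k} (v : 'cV[R]_k) : enorm (- v) = enorm v.
Proof. by rewrite -scaleN1r enormZ normrN normr1 mul1r. Qed.

Lemma enorm_distC {k} (u v : 'cV[R]_k) : enorm (u - v) = enorm (v - u).
Proof. by rewrite -enormN opprB. Qed.

Lemma cauchy_schwarz {k} (u v : 'cV[R]_k) : dot u v <= enorm u * enorm v.
Proof.
apply: le_trans (ler_norm _) _.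
rewrite -(ler_pXn2r (isT : (0 < 2)%N)) ?nnegrE ?mulr_ge0 ?enorm_ge0 //.
by rewrite exprMn !enorm_sqr real_normK ?num_real // dot_sqr_le.
Qed.

Lemma ler_enormD {k} (u v : 'cV[R]_k) : enorm (u + v) <= enorm u + enorm v.
Proof.
rewrite -(ler_pXn2r (isT : (0 < 2)%N)) ?nnegrE ?addr_ge0 ?enorm_ge0 //.
rewrite enorm_sqr dotDl !dotDr sqrrD !enorm_sqr (dotC v u).
have := cauchy_schwarz u v; rewrite mulr2n; lra.
Qed.

Lemma ler_enormB {k} (u v : 'cV[R]_k) : enorm (u - v) <= enorm u + enorm v.
Proof. by apply: le_trans (ler_enormD _ _) _; rewrite enormN. Qed.

Lemma ler_enorm_distD {k} (u v w : 'cV[R]_k) : enorm (u - w) <= enorm (u - v) + enorm (v - w).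
Proof.
have -> : u - w = (u - v) + (v - w) by rewrite addrA subrK.
exact: ler_enormD.
Qed.

End EuclideanNorm.

Section OperatorNorm.
Context {R : realType} {p q : nat}.
Implicit Types (A B : 'M[R]_(p, q)) (v : 'cV[R]_q).

Definition frobenius A : R := Num.sqrt (\sum_(i < p) dot (row i A)^T (row i A)^T).

Lemma enorm_mulmx_le_frobenius A v : enorm (A *m v) <= frobenius A * enorm v.
Proof.
rewrite -(ler_pXn2r (isT : (0 < 2)%N)) ?nnegrE ?mulr_ge0 ?enorm_ge0 ?sqrtr_ge0 //.
rewrite exprMn !enorm_sqr sqr_sqrtr ?sumr_ge0 // => [|i _]; last exact: dotvv_ge0.
rewrite mulr_suml; apply: ler_sum => i _.
have -> : (A *m v) i 0 = dot (row i A)^T v.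
  by rewrite mxE; apply: eq_bigr => j _; rewrite !mxE.
by rewrite -expr2 dot_sqr_le.
Qed.

Let opnorm_set A := [set enorm (A *m v) | v in [set v | enorm v <= 1]].

Lemma opnorm_set_ubound A : has_ubound (opnorm_set A).
Proof.
exists (frobenius A) => _ [v /= v1 <-].
apply: le_trans (enorm_mulmx_le_frobenius _ _) _.
by rewrite ler_piMr ?sqrtr_ge0.
Qed.

Lemma opnorm_ub A v : enorm v <= 1 -> enorm (A *m v) <= opnorm A.
Proof. by move=> v1; apply: (ub_le_sup (opnorm_set_ubound A)); exists v. Qed.

Lemma opnorm_ge0 A : 0 <= opnorm A.
Proof. by rewrite -(@enorm0 _ p) -(mulmx0 _ A) opnorm_ub // enorm0 ler01. Qed.

Lemma enorm_mulmx_le A v : enorm (A *m v) <= opnorm A * enorm v.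
Proof.
have [/enorm_eq0 ->|v0] := eqVneq (enorm v) 0; first by rewrite mulmx0 !enorm0 mulr0.
have vgt0 : 0 < enorm v by rewrite lt_def v0 enorm_ge0.
have := @opnorm_ub A ((enorm v)^-1 *: v).
rewrite -scalemxAr !enormZ ger0_norm ?invr_ge0 ?enorm_ge0 // mulVf // lexx => /(_ isT).
by rewrite ler_pdivrMl // mulrC.
Qed.

Lemma opnorm_le A K : 0 <= K -> (forall v, enorm (A *m v) <= K * enorm v) -> opnorm A <= K.
Proof.
move=> K0 AK; apply: ge_sup; first by exists (enorm (A *m 0)), 0 => //=; rewrite enorm0.
by move=> _ [v /= v1 <-]; apply: le_trans (AK v) _; rewrite ler_piMr.
Qed.

Lemma opnormD A B : opnorm (A + B) <= opnorm A + opnorm B.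
Proof.
apply: opnorm_le => [|v]; first by rewrite addr_ge0 ?opnorm_ge0.
rewrite mulmxDl mulrDl; apply: le_trans (ler_enormD _ _) _.
by rewrite lerD ?enorm_mulmx_le.
Qed.

Lemma enorm_trmx_mul_le A (w : 'cV[R]_p) : enorm (A^T *m w) <= opnorm A * enorm w.
Proof.
have [->|u0] := eqVneq (enorm (A^T *m w)) 0; first by rewrite mulr_ge0 ?opnorm_ge0 ?enorm_ge0.
have ugt0 : 0 < enorm (A^T *m w) by rewrite lt_def u0 enorm_ge0.
have : enorm (A^T *m w) ^+ 2 <= enorm w * (opnorm A * enorm (A^T *m w)).
  rewrite enorm_sqr dot_trmx; apply: le_trans (cauchy_schwarz _ _) _.
  by rewrite ler_wpM2l ?enorm_ge0 ?enorm_mulmx_le.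
move=> h; rewrite -(ler_pM2r ugt0) -expr2; apply: le_trans h _.
by rewrite mulrCA mulrA.
Qed.

End OperatorNorm.

Section SupAndDistance.
Context {R : realType} {k : nat}.
Implicit Types (S : set 'cV[R]_k) (x z : 'cV[R]_k).

Lemma supOn_ub S (g : 'cV[R]_k -> R) x :
  has_ubound [set g y | y in S] -> S x -> g x <= supOn S g.
Proof. by move=> gS Sx; apply: ub_le_sup gS _ _; exists x. Qed.

Lemma setdist_le S x z : S z -> setdist x S <= enorm (x - z).
Proof.
move=> Sz; apply: ge_inf; last by exists z.
by exists 0 => _ [y _ <-]; exact: enorm_ge0.
Qed.

(* Stands in for the nearest point of [S] to [x] used in the paper, which need not
   exist; [z0] keeps the near-minimizers in a prescribed ball. *)
Lemma le_setdist_of_near S x z0 (a eta e0 : R) :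
  S z0 -> 0 < eta -> 0 < e0 ->
  (forall z, S z -> enorm (x - z) <= enorm (x - z0) ->
     enorm (x - z) < setdist x S + e0 -> a <= eta * enorm (x - z)) ->
  a <= eta * setdist x S.
Proof.
move=> Sz0 eta_gt0 e0_gt0 near; apply/ler_addgt0Pr => e e_gt0.
have e'_gt0 : 0 < Num.min e0 (e / eta) by rewrite lt_min e0_gt0 divr_gt0.
have dist_set : [set enorm (x - z) | z in S] !=set0 /\ has_lbound [set enorm (x - z) | z in S].
  by split; [exists (enorm (x - z0)), z0 | exists 0 => _ [y _ <-]; exact: enorm_ge0].
have [_ [z Sz <-] xz] := inf_adherent e'_gt0 dist_set.
pose w := if enorm (x - z) <= enorm (x - z0) then z else z0.
have [Sw [xw_z0 xw_z]] :
    S w /\ enorm (x - w) <= enorm (x - z0) /\ enorm (x - w) <= enorm (x - z).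
  by rewrite /w; case: ifP => // /negbT; rewrite -ltNge => /ltW.
have xw_lt : enorm (x - w) < setdist x S + Num.min e0 (e / eta) := le_lt_trans xw_z xz.
apply: le_trans (near w Sw xw_z0 _) _.
  by apply: lt_le_trans xw_lt _; rewrite lerD2l ge_min lexx.
have : eta * enorm (x - w) <= eta * (setdist x S + e / eta).
  rewrite ler_wpM2l ?(ltW eta_gt0) //; apply/ltW/(lt_le_trans xw_lt).
  by rewrite lerD2l ge_min lexx orbT.
by rewrite mulrDr mulrCA divff ?gt_eqF // mulr1.
Qed.

Lemma eball_convex (c a b : 'cV[R]_k) rho t :
  eball c rho a -> eball c rho b -> 0 <= t <= 1 -> eball c rho (a + t *: (b - a)).
Proof.
rewrite /eball /= => ha hb /andP[t0 t1].
have -> : a + t *: (b - a) - c = (1 - t) *: (a - c) + t *: (b - c).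
  by apply/matrixP => i j; rewrite !mxE; ring.
apply: le_trans (ler_enormD _ _) _; rewrite !enormZ !ger0_norm ?subr_ge0 //.
have : (1 - t) * enorm (a - c) <= (1 - t) * rho by rewrite ler_wpM2l ?subr_ge0.
have : t * enorm (b - c) <= t * rho by rewrite ler_wpM2l.
lra.
Qed.

Lemma eball_of_near {c x z : 'cV[R]_k} {rho : R} :
  eball c (rho / 2) x -> enorm (x - z) <= rho / 2 -> eball c rho z.
Proof.
rewrite /eball /= => xc xz; rewrite (le_trans (ler_enorm_distD _ x _)) // enorm_distC.
by rewrite [rho]splitr lerD.
Qed.

End SupAndDistance.

Section MeanValue.
Context {R : realType} {m n : nat}.

Lemma dot_differentiable (u : 'cV[R]_m) x :
  differentiable (dot u) x /\ 'd (dot u) x = dot u :> ('cV[R]_m -> R).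
Proof.
have dot_lin : linear (dot u) by move=> a v w; rewrite dotDr dotZr.
pose dotL : {linear 'cV[R]_m -> R} := HB.pack (dot u) (GRing.isLinear.Build _ _ _ _ _ dot_lin).
have dot_cont : continuous (dot u).
  have -> : dot u = \sum_(i < m) (fun v : 'cV[R]_m => u i 0 *: (v i 0 : R)).
    by apply/funext => v; rewrite /dot fct_sumE; apply: eq_bigr.
  move=> y; apply: differentiable_continuous; apply: differentiable_sum => i.
  exact/differentiableZ/differentiable_coord.
rewrite -[dot u]/(dotL : _ -> _).
by split; [exact: linear_differentiable | exact: diff_lin].
Qed.

(* Mean value theorem for [t |-> dot (F b - F a) (F (a + t *: (b - a)))] on [0, 1]. *)
Lemma enormB_le_of_jacobian (F : 'cV[R]_n -> 'cV[R]_m) (J : 'cV[R]_n -> 'M[R]_(m, n))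
    (a b : 'cV[R]_n) (K : R) :
  (forall x, differentiable F x) -> (forall x v, 'd F x v = J x *m v) ->
  (forall t, 0 <= t <= 1 -> forall v, enorm (J (a + t *: (b - a)) *m v) <= K * enorm v) ->
  enorm (F b - F a) <= K * enorm (b - a).
Proof.
move=> dF dFJ JK; set w := b - a; set u := F b - F a.
pose seg t : 'cV[R]_n := a + t *: w.
pose g := dot u \o (F \o seg).
have seg_diff t : differentiable seg t /\ 'd seg t = *:%R^~ w :> (R -> 'cV[R]_n).
  have -> : seg = cst a + *:%R^~ w by apply/funext.
  have seg_is_diff : is_diff t (cst a + *:%R^~ w) (0 + *:%R^~ w).
    exact: is_diffD (is_diff_cst a t) (is_diff_scalel t w).
  split; first exact: (ex_diff (is_diff_def := seg_is_diff)).
  by rewrite (diff_val (is_diff_def := seg_is_diff)); apply/funext => s /=; rewrite add0r.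
have g_deriv (t : R) : is_derive t (1 : R) g (dot u (J (seg t) *m w)).
  have dFseg : differentiable (F \o seg) t.
    by apply: differentiable_comp; [exact: (seg_diff t).1 | exact: dF].
  have dg : differentiable g t.
    by apply: differentiable_comp => //; exact: (dot_differentiable _ _).1.
  apply: DeriveDef; first exact: diff_derivable.
  rewrite deriveE // diff_comp; [|exact: dFseg|exact: (dot_differentiable _ _).1].
  rewrite /= (dot_differentiable _ _).2 diff_comp; [|exact: (seg_diff t).1|exact: dF].
  by rewrite /= (seg_diff t).2 /= dFJ scale1r.
have g_cont : {within `[0, 1], continuous g}.
  apply: continuous_subspaceT => t.
  by apply: differentiable_continuous; case: (g_deriv t) => /derivable1_diffP.
have [c /itvP c01 gE] := MVT_segment ler01 (fun t _ => g_deriv t) g_cont.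
have g10 : g 1 - g 0 = enorm u ^+ 2.
  rewrite /g /=; have -> : seg 1 = b by rewrite /seg scale1r /w addrC subrK.
  by rewrite /seg scale0r addr0 -dotBr enorm_sqr.
rewrite g10 subr0 mulr1 in gE.
have Jc : enorm (J (seg c) *m w) <= K * enorm w by apply: JK; rewrite !c01.
have [u0|u_neq0] := eqVneq (enorm u) 0.
  by rewrite u0; apply: le_trans (enorm_ge0 _) Jc.
have u_gt0 : 0 < enorm u by rewrite lt_def u_neq0 enorm_ge0.
rewrite -(ler_pM2l u_gt0) -expr2 gE; apply: le_trans (cauchy_schwarz _ _) _.
by rewrite ler_wpM2l ?enorm_ge0.
Qed.

End MeanValue.

Section PowerBounds.
Context {R : realType}.

Lemma le_powR_self (s r : R) : 0 <= s <= 1 -> r <= 1 -> s <= s `^ r.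
Proof.
case/andP; rewrite le_eqVlt => /predU1P[<- _ _|s_gt0 s1 r1]; first exact: powR_ge0.
by apply: ger1_powR; rewrite ?s_gt0.
Qed.

Lemma powR1Dr (s r : R) : 0 <= s -> 0 < r -> s `^ (1 + r) = s * s `^ r.
Proof.
move=> s0 r0; rewrite powRD ?powRr1 //.
by apply/implyP => /eqP h; move: r0; rewrite -(addKr 1 r) h addr0 oppr_gt0 ltr10.
Qed.

Lemma powR_le_of_le_powRV (s a r : R) :
  0 <= s -> 0 <= a -> 0 < r -> s <= a `^ r^-1 -> s `^ r <= a.
Proof.
move=> s0 a0 r0 sa; apply: le_trans (_ : (a `^ r^-1) `^ r <= a).
  by apply: ge0_ler_powR; rewrite ?nnegrE ?powR_ge0 ?(ltW r0).
by rewrite -powRrM mulVf ?gt_eqF // powRr1.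
Qed.

Lemma mul_powR1D_le (K s r a : R) :
  0 < K -> 0 <= s -> 0 < r -> 0 <= a -> s <= (a / K) `^ r^-1 -> K * s `^ (1 + r) <= a * s.
Proof.
move=> K_gt0 s0 r0 a0 s_le.
have : s `^ r <= a / K by apply: powR_le_of_le_powRV => //; rewrite divr_ge0 // ltW.
rewrite ler_pdivlMr // powR1Dr // mulrCA [a * s]mulrC => Ks_le.
by rewrite ler_wpM2l // mulrC.
Qed.

End PowerBounds.

Section JacobianBoundsOnBall.
Context {R : realType} {m n : nat}.
Context {F : 'cV[R]_n -> 'cV[R]_m} {J : 'cV[R]_n -> 'M[R]_(m, n)}.
Context {xs : 'cV[R]_n} {delta L0 : R}.
Hypothesis F_diff : forall x, differentiable F x.
Hypothesis dF_jacobian : forall x v, 'd F x v = J x *m v.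
Hypotheses (delta_ge0 : 0 <= delta) (L0_ge0 : 0 <= L0).
Hypothesis J_lip : forall y z, eball xs delta y -> eball xs delta z ->
  opnorm (J y - J z) <= L0 * enorm (y - z).

Local Notation B := (eball xs delta).
Local Notation L2 := (supOn B (fun y => opnorm (J y))).

Let B_center : B xs.
Proof. by rewrite /eball /= subrr enorm0. Qed.

Lemma opnorm_jacobian_le_sup y : B y -> opnorm (J y) <= L2.
Proof.
apply: supOn_ub; exists (opnorm (J xs) + L0 * delta) => _ [z Bz <-].
rewrite -[J z](subrK (J xs)) addrC; apply: le_trans (opnormD _ _) _.
rewrite lerD2l; apply: le_trans (J_lip _ _ Bz B_center) _.
by rewrite ler_wpM2l.
Qed.

Lemma enormB_F_le_sup y z : B y -> B z -> enorm (F z - F y) <= L2 * enorm (z - y).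
Proof.
move=> By Bz; apply: enormB_le_of_jacobian => // t t01 v.
apply: le_trans (enorm_mulmx_le _ _) _; rewrite ler_wpM2r ?enorm_ge0 //.
exact/opnorm_jacobian_le_sup/eball_convex.
Qed.

Lemma enorm_F_le_sup y : B y -> enorm (F y) <= supOn B (fun y => enorm (F y)).
Proof.
apply: supOn_ub; exists (enorm (F xs) + L2 * delta) => _ [z Bz <-].
rewrite -[F z](subrK (F xs)) addrC; apply: le_trans (ler_enormD _ _) _.
rewrite lerD2l; apply: le_trans (enormB_F_le_sup _ _ B_center Bz) _.
by rewrite ler_wpM2l // (le_trans (opnorm_ge0 (J xs))) // opnorm_jacobian_le_sup.
Qed.

End JacobianBoundsOnBall.

(* The constant [Chat] of the theorem, with [L3 = L2 ^+ 2 + beta * L0]. *)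
Definition lmmss_constant {R : realType} {p n : nat} (L : 'M[R]_(p, n))
    (L0 L2 beta L4 C r c1 : R) : R :=
  L4 * c1 ^+ 2 + L0 * L2 * (1 + c1) * (2 + c1)
  + (L2 ^+ 2 + beta * L0) `^ r * opnorm L ^+ 2 * c1 + (1 + (1 + c1) `^ (1 + r)) * C.

Lemma lmmss_constant_gt0 {R : realType} {p n : nat} (L : 'M[R]_(p, n))
    (L0 L2 beta L4 C r c1 : R) :
  0 <= L0 -> 0 <= L2 -> 0 < L4 -> 0 <= C -> 0 < c1 ->
  0 < lmmss_constant L L0 L2 beta L4 C r c1.
Proof.
move=> L0_ge0 L2_ge0 L4_gt0 C_ge0 c1_gt0; have c1_ge0 := ltW c1_gt0.
have := mulr_gt0 L4_gt0 (exprn_gt0 2 c1_gt0).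
have := mulr_ge0 (mulr_ge0 (mulr_ge0 L0_ge0 L2_ge0) (addr_ge0 ler01 c1_ge0))
  (addr_ge0 (ler0n _ 2) c1_ge0).
have := mulr_ge0 (mulr_ge0 (powR_ge0 (L2 ^+ 2 + beta * L0) r) (sqr_ge0 (opnorm L))) c1_ge0.
have := mulr_ge0 (addr_ge0 ler01 (powR_ge0 (1 + c1) (1 + r))) C_ge0.
rewrite /lmmss_constant; lra.
Qed.

Section LMMSSStep.
Context {R : realType} {m n p : nat}.
Context {F : 'cV[R]_n -> 'cV[R]_m} {J : 'cV[R]_n -> 'M[R]_(m, n)} {L : 'M[R]_(p, n)}.
Context {B : set 'cV[R]_n} {L0 L2 beta L4 C r c1 : R}.
Hypotheses (L0_ge0 : 0 <= L0) (L2_ge0 : 0 <= L2) (beta_ge0 : 0 <= beta) (L4_ge0 : 0 <= L4).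
Hypotheses (C_ge0 : 0 <= C) (r_gt0 : 0 < r) (r_le1 : r <= 1) (c1_ge0 : 0 <= c1).

Local Notation grad y := ((J y)^T *m F y).

Hypothesis J_lip : forall y z, B y -> B z -> opnorm (J y - J z) <= L0 * enorm (y - z).
Hypothesis J_bound : forall y, B y -> opnorm (J y) <= L2.
Hypothesis F_lip : forall y z, B y -> B z -> enorm (F z - F y) <= L2 * enorm (z - y).
Hypothesis F_bound : forall y, B y -> enorm (F y) <= beta.
Hypothesis J_defect : forall y z, B y -> Xstar F J z -> B z ->
  enorm ((J y - J z)^T *m F z) <= C * enorm (y - z) `^ (1 + r).
Hypothesis grad_taylor : forall y z, B y -> B z ->
  enorm (grad z - grad y - ((J y)^T *m J y) *m (z - y))
    <= L4 * enorm (y - z) ^+ 2 + enorm ((J y - J z)^T *m F z).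

Context {x d z : 'cV[R]_n}.
Hypotheses (Bx : B x) (Bxd : B (x + d)) (Bz : B z) (Xz : Xstar F J z).
Hypothesis d_le : enorm d <= c1 * enorm (x - z).
Hypothesis dist_le1 : enorm (x - z) <= 1.

Local Notation s := (enorm (x - z)).

Let s_ge0 : 0 <= s. Proof. exact: enorm_ge0. Qed.

Let sqr_le_powR : s ^+ 2 <= s `^ (1 + r).
Proof. by rewrite powR1Dr // expr2 ler_wpM2l // le_powR_self ?s_ge0. Qed.

Lemma enorm_grad_le : enorm (grad x) <= (L2 ^+ 2 + beta * L0) * s.
Proof.
have -> : grad x = (J x)^T *m (F x - F z) + (J x - J z)^T *m F z.
  by rewrite [(J x - J z)^T]linearB mulmxBl mulmxBr [(J z)^T *m F z]Xz subr0 subrK.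
apply: le_trans (ler_enormD _ _) _; rewrite mulrDl.
apply: lerD; apply: le_trans (enorm_trmx_mul_le _ _) _.
  rewrite expr2 -mulrA; apply: ler_pM; rewrite ?opnorm_ge0 ?enorm_ge0 ?J_bound //.
  exact: F_lip.
rewrite -mulrA mulrC; apply: ler_pM; rewrite ?opnorm_ge0 ?enorm_ge0 ?F_bound //.
exact: J_lip.
Qed.

Lemma enorm_jacobian_defect_le :
  enorm ((J x - J (x + d))^T *m F (x + d))
    <= (1 + (1 + c1) `^ (1 + r)) * C * s `^ (1 + r) + L0 * L2 * c1 * (1 + c1) * s ^+ 2.
Proof.
have xd_z : enorm (x + d - z) <= (1 + c1) * s.
  by rewrite addrAC mulrDl mul1r; apply: le_trans (ler_enormD _ _) _; rewrite lerD2l.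
have x_xd : enorm (x - (x + d)) = enorm d by rewrite opprD addNKr enormN.
have -> : (J x - J (x + d))^T *m F (x + d) =
    ((J x - J z)^T *m F z - (J (x + d) - J z)^T *m F z)
    + (J x - J (x + d))^T *m (F (x + d) - F z).
  by rewrite -mulmxBl -linearB opprB subrKA -mulmxDr subrKC.
have defect_xd : enorm ((J (x + d) - J z)^T *m F z)
    <= C * ((1 + c1) `^ (1 + r) * s `^ (1 + r)).
  apply: le_trans (J_defect _ _ Bxd Xz Bz) _.
  rewrite ler_wpM2l // -powRM ?mulr_ge0 ?addr_ge0 //.
  by apply: ge0_ler_powR; rewrite ?nnegrE ?enorm_ge0 ?mulr_ge0 ?addr_ge0 ?(ltW r_gt0).
have lip_xd : enorm ((J x - J (x + d))^T *m (F (x + d) - F z))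
    <= (L0 * (c1 * s)) * (L2 * ((1 + c1) * s)).
  apply: le_trans (enorm_trmx_mul_le _ _) _.
  apply: ler_pM; rewrite ?opnorm_ge0 ?enorm_ge0 //.
    by apply: le_trans (J_lip _ _ Bx Bxd) _; rewrite x_xd ler_wpM2l.
  by apply: le_trans (F_lip _ _ Bz Bxd) _; rewrite ler_wpM2l.
rewrite (_ : (1 + (1 + c1) `^ (1 + r)) * C * s `^ (1 + r)
    = C * s `^ (1 + r) + C * ((1 + c1) `^ (1 + r) * s `^ (1 + r))); last by ring.
rewrite (_ : L0 * L2 * c1 * (1 + c1) * s ^+ 2 = (L0 * (c1 * s)) * (L2 * ((1 + c1) * s)));
  last by ring.
apply: le_trans (ler_enormD _ _) _; apply: lerD => //.
by apply: le_trans (ler_enormB _ _) _; apply: lerD => //; exact: J_defect.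
Qed.

Lemma enorm_regularization_le :
  enorm (enorm (grad x) `^ r *: (L^T *m L *m d))
    <= (L2 ^+ 2 + beta * L0) `^ r * opnorm L ^+ 2 * c1 * s `^ (1 + r).
Proof.
have lambda_le : enorm (grad x) `^ r <= (L2 ^+ 2 + beta * L0) `^ r * s `^ r.
  have L3_ge0 : 0 <= L2 ^+ 2 + beta * L0 by rewrite addr_ge0 ?sqr_ge0 ?mulr_ge0.
  rewrite -powRM //; apply: ge0_ler_powR; rewrite ?nnegrE ?mulr_ge0 ?enorm_ge0 ?(ltW r_gt0) //.
  exact: enorm_grad_le.
have LLd : enorm (L^T *m (L *m d)) <= opnorm L ^+ 2 * (c1 * s).
  apply: le_trans (enorm_trmx_mul_le _ _) _; rewrite expr2 -mulrA ler_wpM2l ?opnorm_ge0 //.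
  by apply: le_trans (enorm_mulmx_le _ _) _; rewrite ler_wpM2l ?opnorm_ge0.
rewrite enormZ ger0_norm ?powR_ge0 // -mulmxA powR1Dr //.
rewrite [X in _ <= X](_ : _ = (L2 ^+ 2 + beta * L0) `^ r * s `^ r * (opnorm L ^+ 2 * (c1 * s)));
  last by ring.
by apply: ler_pM; rewrite ?powR_ge0 ?enorm_ge0.
Qed.

Hypothesis step :
  ((J x)^T *m J x + (enorm (grad x) `^ r) *: (L^T *m L)) *m d = - grad x.

Lemma enorm_grad_step_le :
  enorm (grad (x + d)) <= lmmss_constant L L0 L2 beta L4 C r c1 * s `^ (1 + r).
Proof.
set N := enorm (grad x) `^ r *: (L^T *m L *m d).
set M := ((J x)^T *m J x) *m (x + d - x).
have MN : M + N = - grad x by rewrite /M /N addrAC subrr add0r -step mulmxDl -scalemxAl.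
have -> : grad (x + d) = (grad (x + d) - grad x - M) - N.
  by rewrite -addrA -opprD MN opprK subrK.
have taylor := grad_taylor _ _ Bx Bxd.
rewrite opprD addNKr enormN in taylor.
have d_sqr : L4 * enorm d ^+ 2 <= L4 * c1 ^+ 2 * s `^ (1 + r).
  rewrite -mulrA ler_wpM2l //; apply: le_trans (_ : (c1 * s) ^+ 2 <= _).
    by rewrite !expr2; apply: ler_pM; rewrite ?enorm_ge0.
  by rewrite exprMn ler_wpM2l ?sqr_ge0.
have lip_sqr : L0 * L2 * c1 * (1 + c1) * s ^+ 2
    <= L0 * L2 * (1 + c1) * (2 + c1) * s `^ (1 + r).
  apply: le_trans (_ : L0 * L2 * (1 + c1) * (2 + c1) * s ^+ 2 <= _).
    rewrite [X in X <= _](_ : _ = L0 * L2 * (1 + c1) * s ^+ 2 * c1); last by ring.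
    rewrite [X in _ <= X](_ : _ = L0 * L2 * (1 + c1) * s ^+ 2 * (2 + c1)); last by ring.
    by rewrite ler_wpM2l ?mulr_ge0 ?sqr_ge0 ?addr_ge0 //; lra.
  by rewrite ler_wpM2l ?mulr_ge0 ?addr_ge0.
apply: le_trans (ler_enormB _ _) _.
have := enorm_jacobian_defect_le; have := enorm_regularization_le.
rewrite /lmmss_constant; lra.
Qed.

End LMMSSStep.

Theorem mainTheorem8 (R : realType) (m n p : nat)
  (F : 'cV[R]_n -> 'cV[R]_m) (J : 'cV[R]_n -> 'M[R]_(m, n))
  (L : 'M[R]_(p, n)) (xs : 'cV[R]_n)
  (gamma delta L0 omega r C L4 c1 eta eps : R)
  (x d : 'cV[R]_n) :
  (n <= m)%N ->
  C2_with_jacobian F J ->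
  (p <= n)%N -> \rank L = p ->
  xs \in Xstar F J ->
  (* (A1) with Omega containing B(x*, delta) *)
  0 < gamma ->
  (forall y, eball xs delta y -> forall v : 'cV[R]_n,
      enorm (J y *m v) ^+ 2 + enorm (L *m v) ^+ 2 >= gamma * enorm v ^+ 2) ->
  (* (A2) *)
  0 < delta < 1 -> 0 < L0 ->
  (forall y z, eball xs delta y -> eball xs delta z ->
      opnorm (J y - J z) <= L0 * enorm (y - z)) ->
  (* (A3) *)
  0 < omega ->
  (forall y, eball xs delta y -> omega * setdist y (Xstar F J) <= enorm ((J y)^T *m F y)) ->
  (* (A4) *)
  0 < r <= 1 -> 0 <= C ->
  (forall y z, eball xs delta y -> Xstar F J z -> eball xs delta z ->
      enorm ((J y - J z)^T *m F z) <= C * enorm (y - z) `^ (1 + r)) ->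
  (* the constant L4 *)
  0 < L4 ->
  (forall y z, eball xs delta y -> eball xs delta z ->
      enorm ((J z)^T *m F z - (J y)^T *m F y - ((J y)^T *m J y) *m (z - y))
        <= L4 * enorm (y - z) ^+ 2 + enorm ((J y - J z)^T *m F z)) ->
  (* the LMMSS step with lambda_k = ||J_k^T F_k||^r *)
  ((J x)^T *m J x + (enorm ((J x)^T *m F x) `^ r) *: (L^T *m L)) *m d
      = - ((J x)^T *m F x) ->
  0 < c1 -> enorm d <= c1 * setdist x (Xstar F J) ->
  0 < eta < 1 ->
  let L2 := supOn (eball xs delta) (fun y => opnorm (J y)) in
  let beta := supOn (eball xs delta) (fun y => enorm (F y)) in
  let L3 := L2 ^+ 2 + beta * L0 in
  let L5 := L0 * L2 * (1 + c1) * (2 + c1) in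
  let L7 := L4 * c1 ^+ 2 + L5 + (L3 `^ r) * opnorm L ^+ 2 * c1 in
  let Chat := L7 + (1 + (1 + c1) `^ (1 + r)) * C in
  eball xs (delta / 2) x -> eball xs (delta / 2) (x + d) ->
  setdist x (Xstar F J) < eps ->
  eps <= (eta * omega / Chat) `^ r^-1 ->
  setdist (x + d) (Xstar F J) <= eta * setdist x (Xstar F J).
Proof.
(* (A1), [n <= m] and the rank of [L] only make the step well defined and give
   [enorm d <= c1 * dist], which is assumed here. *)
move=> _ [F_diff [dF_jacobian _]] _ _ xs_X _ _ /andP[delta_gt0 delta_lt1] L0_gt0 J_lip
  omega_gt0 A3 /andP[r_gt0 r_le1] C_ge0 A4 L4_gt0 taylor step c1_gt0 d_le /andP[eta_gt0 _]
  L2 beta L3 L5 L7 Chat x_near xd_near dist_lt_eps eps_le.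
have delta_ge0 := ltW delta_gt0; have L0_ge0 := ltW L0_gt0.
have half y : eball xs (delta / 2) y -> eball xs delta y.
  by move/eball_of_near; apply; rewrite subrr enorm0 divr_ge0.
have B_xs : eball xs delta xs by rewrite /eball /= subrr enorm0.
have J_bound := opnorm_jacobian_le_sup delta_ge0 L0_ge0 J_lip.
have F_bound := enorm_F_le_sup F_diff dF_jacobian delta_ge0 L0_ge0 J_lip.
have L2_ge0 : 0 <= L2 := le_trans (opnorm_ge0 _) (J_bound _ B_xs).
have beta_ge0 : 0 <= beta := le_trans (enorm_ge0 _) (F_bound _ B_xs).
have grad_next := enorm_grad_step_le L0_ge0 L2_ge0 beta_ge0 (ltW L4_gt0) C_ge0 r_gt0 r_le1
  (ltW c1_gt0) J_lip J_bound (enormB_F_le_sup F_diff dF_jacobian delta_ge0 L0_ge0 J_lip)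
  F_bound A4 taylor.
have e0_gt0 : 0 < eps - setdist x (Xstar F J) by rewrite subr_gt0.
apply: (le_setdist_of_near _ _ _ _ _ _ (set_mem xs_X) eta_gt0 e0_gt0).
move=> z Xz xz_le; rewrite subrKC => xz_lt.
have xz_half : enorm (x - z) <= delta / 2 := le_trans xz_le x_near.
have B_z := eball_of_near x_near xz_half.
have xz_le1 : enorm (x - z) <= 1 by apply: le_trans xz_half _; rewrite ler_pdivrMr //; lra.
have d_le' : enorm d <= c1 * enorm (x - z).
  by apply: le_trans d_le _; rewrite ler_wpM2l ?(ltW c1_gt0) //; exact: setdist_le.
rewrite -(ler_pM2l omega_gt0) mulrA [omega * eta]mulrC.
apply: le_trans (A3 _ (half _ xd_near)) _.
apply: le_trans (grad_next _ _ x d z (half _ x_near) (half _ xd_near) B_z Xz d_le' xz_le1 step) _.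
apply: mul_powR1D_le; rewrite ?enorm_ge0 ?mulr_ge0 ?(ltW eta_gt0) ?(ltW omega_gt0) //.
  exact: lmmss_constant_gt0.
exact: le_trans (ltW xz_lt) eps_le.
Qed.
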